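(* Let $\psi$ be a formula, let $I$ be a total interpretation (defined on all pairs $(p,(d_1,\dots,d_n))$ with $d_i\in\mathcal D$) which interprets equality as identity, and let $I^\dagger$ be any classical interpretation agreeing with $I$ on all pairs whose arguments lie in $\mathcal D$ and interpreting equality as identity on $\mathcal D\cup\{\mathsf{NOFLOW}\}$. Let $\sigma$ be a partial firing for $\psi$ and $I$, i.e. $\sigma,I\models_P\psi$ and $MFA(\sigma)$. Fix $d_0\in\mathcal D$ and define the total classical assignment $\sigma^\dagger$ by: $\sigma^\dagger(x)=\sigma(x)$ if $\sigma(x)$ is defined and $\sigma^\dagger(x)=\mathrm{false}$ otherwise; $\sigma^\dagger(\hat x)=\sigma(\hat x)$ if $\sigma(\hat x)$ is defined; $\sigma^\dagger(\hat x)=\mathsf{NOFLOW}$ if $\sigma(\hat x)$ is undefined and $\sigma(x)\neq\mathrm{true}$; $\sigma^\dagger(\hat x)=d_0$ if $\sigma(\hat x)$ is undefined and $\sigma(x)=\mathrm{true}$. Then $\sigma^\dagger$ is a classical firing for $\psi$ and $I^\dagger$, i.e. $\sigma^\dagger,I^\dagger\models_C\psi\wedge\bigwedge_{x\in V(\psi)}FA(x)$.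
   Context: Fix a set $\mathcal X$ of synchronisation variables and, for each $x\in\mathcal X$, a distinct data flow variable $\hat x$; $\hat{\mathcal X}=\{\hat x : x\in\mathcal X\}$. Fix function symbols $\mathcal F$ and predicate symbols $\mathcal P$ (with arities), $\mathcal P$ containing binary equality $=$. $\mathcal D$ is the set of ground terms over $\mathcal F$; $\mathsf{NOFLOW}$ is a constant not in $\mathcal D$. Formulas and terms: $\psi ::= \top \mid x \mid \psi_1\wedge\psi_2 \mid \neg\psi \mid p(t_1,\dots,t_n)$, $t ::= \hat x \mid f(t_1,\dots,t_n)$ (classical formulas may additionally use the constant term $\mathsf{NOFLOW}$). $\mathrm{fv}(\psi)$ is the set of variables of $\mathcal X\cup\hat{\mathcal X}$ occurring in $\psi$, and $V(\psi)=\{x\in\mathcal X : x\in\mathrm{fv}(\psi)\text{ or }\hat x\in\mathrm{fv}(\psi)\}$. Disjunction, implication and biimplication are the usual abbreviations via $\neg,\wedge$. Partial logic: an assignment $\sigma$ is a partial map sending $x\in\mathcal X$ to $\{\mathrm{true},\mathrm{false}\}$ and $\hat x$ to $\mathcal D$; an interpretation $I$ is a partial map from pairs $(p,(d_1,\dots,d_n))$ ($d_i\in\mathcal D$) to $\{\mathrm{true},\mathrm{false}\}$; $\mathrm{Val}_\sigma(\hat x)=\sigma(\hat x)$, $\mathrm{Val}_\sigma(f(\vec t))=f(\mathrm{Val}_\sigma(t_1),\dots)$, undefined if some argument is. Partial satisfaction $\models_P$ / dissatisfaction $\mathrel{=\!\!|}_P$: $\models_P\top$ always; $\models_P x$ iff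 $\sigma(x)=\mathrm{true}$; $\models_P\psi_1\wedge\psi_2$ iff both; $\models_P\neg\psi$ iff $\mathrel{=\!\!|}_P\psi$; $\models_P p(\vec t)$ iff all $\mathrm{Val}_\sigma(t_i)$ are defined and $I(p,(\mathrm{Val}_\sigma(t_i))_i)=\mathrm{true}$; $\mathrel{=\!\!|}_P\top$ never; $\mathrel{=\!\!|}_P x$ iff $\sigma(x)=\mathrm{false}$; $\mathrel{=\!\!|}_P\psi_1\wedge\psi_2$ iff one conjunct is dissatisfied; $\mathrel{=\!\!|}_P\neg\psi$ iff $\models_P\psi$; $\mathrel{=\!\!|}_P p(\vec t)$ iff all values defined and $I(\dots)=\mathrm{false}$. $MFA(\sigma)$ (meta-flow axiom): for all $x\in\mathcal X$, if $\sigma(\hat x)$ is defined then $\sigma(x)=\mathrm{true}$. A partial firing for $\psi$ and $I$ is $\sigma$ with $\sigma,I\models_P\psi$ and $MFA(\sigma)$. Classical logic: a classical assignment is a total map sending each $x\in\mathcal X$ to $\{\mathrm{true},\mathrm{false}\}$ and each $\hat x$ to $\mathcal D\cup\{\mathsf{NOFLOW}\}$; a classical interpretation is a total map from pairs $(p,(d_1,\dots,d_n))$ with $d_i\in\mathcal D\cup\{\mathsf{NOFLOW}\}$ to $\{\mathrm{true},\mathrm{false}\}$; $\mathrm{Val}_\sigma(f(t_1,\dots,t_n))=\mathsf{NOFLOW}$ if some $\mathrm{Val}_\sigma(t_i)=\mathsf{NOFLOW}$, otherwise $f(\mathrm{Val}_\sigma(t_1),\dots)$. Classical satisfaction $\models_C$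 is standard: $\top$ always; $x$ iff $\sigma(x)=\mathrm{true}$; $\wedge$ iff both; $\neg\psi$ iff not $\sigma,I\models_C\psi$; $p(\vec t)$ iff $I(p,(\mathrm{Val}_\sigma(t_i))_i)=\mathrm{true}$. The flow axiom for $x$ is $FA(x):=\neg x\leftrightarrow(\hat x=\mathsf{NOFLOW})$. A classical firing for $\psi$ and $I$ is a classical assignment $\sigma$ with $\sigma,I\models_C\psi\wedge\bigwedge_{x\in V(\psi)}FA(x)$. *)

From Stdlib Require Import List Bool.
Import ListNotations.

(* Ground terms D over function symbols Fs (arities checked separately). *)
Inductive gterm (Fs : Type) : Type :=
| GApp : Fs -> list (gterm Fs) -> gterm Fs.
Arguments GApp {Fs} f args.

(* Terms: TVar x stands for the data flow variable x-hat; TNoflow is the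
   constant NOFLOW (only allowed in classical formulas). *)
Inductive term (Xs Fs : Type) : Type :=
| TVar : Xs -> term Xs Fs
| TApp : Fs -> list (term Xs Fs) -> term Xs Fs
| TNoflow : term Xs Fs.
Arguments TVar {Xs Fs} x.
Arguments TApp {Xs Fs} f ts.
Arguments TNoflow {Xs Fs}.

(* Formulas: FSync x is the synchronisation variable x. *)
Inductive form (Xs Fs Ps : Type) : Type :=
| FTop : form Xs Fs Ps
| FSync : Xs -> form Xs Fs Ps
| FAnd : form Xs Fs Ps -> form Xs Fs Ps -> form Xs Fs Ps
| FNot : form Xs Fs Ps -> form Xs Fs Ps
| FPred : Ps -> list (term Xs Fs) -> form Xs Fs Ps.
Arguments FTop {Xs Fs Ps}.
Arguments FSync {Xs Fs Ps} x.
Arguments FAnd {Xs Fs Ps} a b.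
Arguments FNot {Xs Fs Ps} a.
Arguments FPred {Xs Fs Ps} p ts.

Definition FImp {Xs Fs Ps} (a b : form Xs Fs Ps) := FNot (FAnd a (FNot b)).
Definition FIff {Xs Fs Ps} (a b : form Xs Fs Ps) := FAnd (FImp a b) (FImp b a).

Fixpoint wf_g {Fs} (arF : Fs -> nat) (d : gterm Fs) : Prop :=
  match d with
  | GApp f ds =>
      length ds = arF f /\
      (fix wfl (l : list (gterm Fs)) : Prop :=
         match l with [] => True | d' :: l' => wf_g arF d' /\ wfl l' end) ds
  end.

Fixpoint wf_term {Xs Fs} (arF : Fs -> nat) (t : term Xs Fs) : Prop :=
  match t with
  | TVar _ => True
  | TApp f ts =>
      length ts = arF f /\
      (fix wfl (l : list (term Xs Fs)) : Prop :=
         match l with [] => True | t' :: l' => wf_term arF t' /\ wfl l' end) ts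
  | TNoflow => False
  end.

Fixpoint wf_form {Xs Fs Ps} (arF : Fs -> nat) (arP : Ps -> nat)
  (phi : form Xs Fs Ps) : Prop :=
  match phi with
  | FTop => True
  | FSync _ => True
  | FAnd a b => wf_form arF arP a /\ wf_form arF arP b
  | FNot a => wf_form arF arP a
  | FPred p ts => length ts = arP p /\ Forall (wf_term arF) ts
  end.

(* Variables: V(psi) as a list (x occurs if x or x-hat occurs). *)
Fixpoint vars_term {Xs Fs} (t : term Xs Fs) : list Xs :=
  match t with
  | TVar x => [x]
  | TApp _ ts =>
      (fix vl (l : list (term Xs Fs)) : list Xs :=
         match l with [] => [] | t' :: l' => vars_term t' ++ vl l' end) ts
  | TNoflow => []
  end.

Fixpoint V {Xs Fs Ps} (phi : form Xs Fs Ps) : list Xs :=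
  match phi with
  | FTop => []
  | FSync x => [x]
  | FAnd a b => V a ++ V b
  | FNot a => V a
  | FPred _ ts => flat_map vars_term ts
  end.

(* A partial assignment is a pair (sx, sd): sx x = sigma(x), sd x = sigma(x-hat). *)
Fixpoint valP {Xs Fs} (sd : Xs -> option (gterm Fs)) (t : term Xs Fs)
  : option (gterm Fs) :=
  match t with
  | TVar x => sd x
  | TApp f ts =>
      match (fix vl (l : list (term Xs Fs)) : option (list (gterm Fs)) :=
               match l with
               | [] => Some []
               | t' :: l' =>
                   match valP sd t', vl l' with
                   | Some d, Some ds => Some (d :: ds)
                   | _, _ => None
                   end
               end) ts with
      | Some ds => Some (GApp f ds)
      | None => None
      end
  | TNoflow => None
  end.

Fixpoint valsP {Xs Fs} (sd : Xs -> option (gterm Fs)) (l : list (term Xs Fs))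
  : option (list (gterm Fs)) :=
  match l with
  | [] => Some []
  | t :: l' =>
      match valP sd t, valsP sd l' with
      | Some d, Some ds => Some (d :: ds)
      | _, _ => None
      end
  end.

(* Partial interpretation: I p ds = None means undefined. *)
Fixpoint satP {Xs Fs Ps} (sx : Xs -> option bool) (sd : Xs -> option (gterm Fs))
  (I : Ps -> list (gterm Fs) -> option bool) (phi : form Xs Fs Ps) : Prop :=
  match phi with
  | FTop => True
  | FSync x => sx x = Some true
  | FAnd a b => satP sx sd I a /\ satP sx sd I b
  | FNot a => dsatP sx sd I a
  | FPred p ts => exists ds, valsP sd ts = Some ds /\ I p ds = Some true
  end
with dsatP {Xs Fs Ps} (sx : Xs -> option bool) (sd : Xs -> option (gterm Fs))
  (I : Ps -> list (gterm Fs) -> option bool) (phi : form Xs Fs Ps) : Prop :=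
  match phi with
  | FTop => False
  | FSync x => sx x = Some false
  | FAnd a b => dsatP sx sd I a \/ dsatP sx sd I b
  | FNot a => satP sx sd I a
  | FPred p ts => exists ds, valsP sd ts = Some ds /\ I p ds = Some false
  end.

Definition MFA {Xs Fs} (sx : Xs -> option bool) (sd : Xs -> option (gterm Fs))
  : Prop :=
  forall x, sd x <> None -> sx x = Some true.

Definition partial_firing {Xs Fs Ps} (sx : Xs -> option bool)
  (sd : Xs -> option (gterm Fs)) (I : Ps -> list (gterm Fs) -> option bool)
  (psi : form Xs Fs Ps) : Prop :=
  satP sx sd I psi /\ MFA sx sd.

Inductive cval (Fs : Type) : Type :=
| CD : gterm Fs -> cval Fs
| CNoflow : cval Fs.
Arguments CD {Fs} d.
Arguments CNoflow {Fs}.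

Definition wf_cv {Fs} (arF : Fs -> nat) (v : cval Fs) : Prop :=
  match v with CD d => wf_g arF d | CNoflow => True end.

Fixpoint lift_args {Fs} (l : list (cval Fs)) : option (list (gterm Fs)) :=
  match l with
  | [] => Some []
  | CD d :: l' =>
      match lift_args l' with Some ds => Some (d :: ds) | None => None end
  | CNoflow :: _ => None
  end.

Fixpoint valC {Xs Fs} (cd : Xs -> cval Fs) (t : term Xs Fs) : cval Fs :=
  match t with
  | TVar x => cd x
  | TApp f ts =>
      match lift_args
              ((fix vl (l : list (term Xs Fs)) : list (cval Fs) :=
                  match l with [] => [] | t' :: l' => valC cd t' :: vl l' end) ts)
      with
      | Some ds => CD (GApp f ds)
      | None => CNoflow
      end
  | TNoflow => CNoflow
  end.

Fixpoint satC {Xs Fs Ps} (cx : Xs -> bool) (cd : Xs -> cval Fs)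
  (Ic : Ps -> list (cval Fs) -> bool) (phi : form Xs Fs Ps) : Prop :=
  match phi with
  | FTop => True
  | FSync x => cx x = true
  | FAnd a b => satC cx cd Ic a /\ satC cx cd Ic b
  | FNot a => ~ satC cx cd Ic a
  | FPred p ts => Ic p (map (valC cd) ts) = true
  end.

(* Flow axiom FA(x) := ~x <-> (x-hat = NOFLOW), with eqP the equality symbol. *)
Definition FA {Xs Fs Ps} (eqP : Ps) (x : Xs) : form Xs Fs Ps :=
  FIff (FNot (FSync x)) (FPred eqP [TVar x; TNoflow]).

Definition bigAnd {Xs Fs Ps} (l : list (form Xs Fs Ps)) : form Xs Fs Ps :=
  fold_right FAnd FTop l.

Definition classical_firing {Xs Fs Ps} (eqP : Ps) (cx : Xs -> bool)
  (cd : Xs -> cval Fs) (Ic : Ps -> list (cval Fs) -> bool)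
  (psi : form Xs Fs Ps) : Prop :=
  satC cx cd Ic (FAnd psi (bigAnd (map (FA eqP) (V psi)))).

Definition dagger_x {Xs} (sx : Xs -> option bool) (x : Xs) : bool :=
  match sx x with Some b => b | None => false end.

Definition dagger_d {Xs Fs} (d0 : gterm Fs) (sx : Xs -> option bool)
  (sd : Xs -> option (gterm Fs)) (x : Xs) : cval Fs :=
  match sd x with
  | Some d => CD d
  | None => match sx x with Some true => CD d0 | _ => CNoflow end
  end.

(* A partially satisfied atom has all its arguments defined, so its classical
   value under σ† is read off the same ground terms, on which I† agrees with I;
   by simultaneous induction, partial satisfaction (resp. dissatisfaction)
   implies classical truth (resp. falsity).  The flow axioms hold because
   σ†(x̂) = NOFLOW exactly when σ†(x) is false: a defined x̂ forces σ(x) = true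
   by MFA, and an undefined x̂ is completed by d0 precisely when σ(x) = true. *)
From Stdlib Require Import List.
Import ListNotations.

Lemma valP_TApp {Xs Fs} (sd : Xs -> option (gterm Fs)) f ts :
  valP sd (TApp f ts) =
  match valsP sd ts with Some ds => Some (GApp f ds) | None => None end.
Proof.
  simpl. match goal with |- match ?vl ts with _ => _ end = _ =>
    assert (E : forall l, vl l = valsP sd l) end.
  { induction l as [|t l IH]; simpl; [reflexivity|]. now rewrite IH. }
  now rewrite E.
Qed.

Lemma valC_TApp {Xs Fs} (cd : Xs -> cval Fs) f ts :
  valC cd (TApp f ts) =
  match lift_args (map (valC cd) ts) with Some ds => CD (GApp f ds) | None => CNoflow end.
Proof.
  simpl. match goal with |- match lift_args (?vl ts) with _ => _ end = _ =>
    assert (E : forall l, vl l = map (valC cd) l) end.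
  { induction l as [|t l IH]; simpl; [reflexivity|]. now rewrite IH. }
  now rewrite E.
Qed.

Lemma wf_term_TApp {Xs Fs} arF f (ts : list (term Xs Fs)) :
  wf_term arF (TApp f ts) -> length ts = arF f /\ Forall (wf_term arF) ts.
Proof.
  simpl. intros [Hlen Hts]. split; [exact Hlen|]. clear Hlen.
  induction ts as [|t ts IH]; simpl in *; [constructor|].
  destruct Hts. constructor; auto.
Qed.

Lemma wf_g_GApp {Fs} arF f (ds : list (gterm Fs)) :
  length ds = arF f -> Forall (wf_g arF) ds -> wf_g arF (GApp f ds).
Proof.
  simpl. intros Hlen Hds. split; [exact Hlen|]. clear Hlen.
  induction Hds; simpl; auto.
Qed.

Lemma lift_args_map_CD {Fs} (ds : list (gterm Fs)) : lift_args (map CD ds) = Some ds.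
Proof. induction ds as [|d ds IH]; simpl; [reflexivity|]. now rewrite IH. Qed.

(* The derived induction principle of [term] gives no hypothesis for the
   arguments of [TApp], since they sit inside a list. *)
Fixpoint term_ind_nested {Xs Fs} (P : term Xs Fs -> Prop)
  (HVar : forall x, P (TVar x))
  (HApp : forall f ts, Forall P ts -> P (TApp f ts))
  (HNoflow : P TNoflow) (t : term Xs Fs) : P t :=
  match t with
  | TVar x => HVar x
  | TApp f ts =>
      HApp f ts ((fix go (l : list (term Xs Fs)) : Forall P l :=
                    match l with
                    | [] => Forall_nil _
                    | t :: l => Forall_cons _ (term_ind_nested P HVar HApp HNoflow t) (go l)
                    end) ts)
  | TNoflow => HNoflow
  end.

Section Terms.
Variables (Xs Fs : Type) (arF : Fs -> nat).
Variables (sd : Xs -> option (gterm Fs)) (cd : Xs -> cval Fs).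
Hypothesis sd_wf : forall x d, sd x = Some d -> wf_g arF d.
Hypothesis cd_extends_sd : forall x d, sd x = Some d -> cd x = CD d.

Definition valC_extends_valP (t : term Xs Fs) : Prop :=
  forall d, valP sd t = Some d -> valC cd t = CD d /\ wf_g arF d.

Lemma map_valC_of_valsP (ts : list (term Xs Fs)) ds :
  Forall valC_extends_valP ts -> valsP sd ts = Some ds ->
  map (valC cd) ts = map CD ds /\ Forall (wf_g arF) ds /\ length ds = length ts.
Proof.
  intros Hts. revert ds.
  induction Hts as [|t ts Ht Hts IH]; intros ds Hds; simpl in Hds.
  - injection Hds as <-. repeat constructor.
  - destruct (valP sd t) as [d|] eqn:Et; [|discriminate].
    destruct (valsP sd ts) as [ds'|]; [|discriminate].
    injection Hds as <-.
    destruct (Ht d Et) as [Hval Hwf].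
    destruct (IH ds' eq_refl) as [Hmap [Hwfs Hlen]].
    simpl. rewrite Hval, Hmap. repeat constructor; simpl; auto.
Qed.

Lemma valC_of_valP (t : term Xs Fs) : wf_term arF t -> valC_extends_valP t.
Proof.
  induction t as [x|f ts IH|] using term_ind_nested; intros Hwf d Hd.
  - simpl in *. eauto.
  - apply wf_term_TApp in Hwf as [Hlen Hwfs].
    rewrite valP_TApp in Hd. rewrite valC_TApp.
    destruct (valsP sd ts) as [ds|] eqn:Eds; [|discriminate].
    injection Hd as <-.
    assert (Hts : Forall valC_extends_valP ts).
    { rewrite Forall_forall in IH, Hwfs |- *. auto. }
    destruct (map_valC_of_valsP ts ds Hts Eds) as [-> [Hwfds Hlends]].
    rewrite lift_args_map_CD. split; [reflexivity|].
    apply wf_g_GApp; congruence.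
  - contradiction.
Qed.

Lemma map_valC_of_valsP_wf (ts : list (term Xs Fs)) ds :
  Forall (wf_term arF) ts -> valsP sd ts = Some ds ->
  map (valC cd) ts = map CD ds /\ Forall (wf_g arF) ds /\ length ds = length ts.
Proof.
  intros Hwf. apply map_valC_of_valsP.
  eapply Forall_impl; [|exact Hwf]. exact valC_of_valP.
Qed.

End Terms.

Section Formulas.
Variables (Xs Fs Ps : Type) (arF : Fs -> nat) (arP : Ps -> nat).
Variables (sx : Xs -> option bool) (sd : Xs -> option (gterm Fs)).
Variables (cx : Xs -> bool) (cd : Xs -> cval Fs).
Variables (I : Ps -> list (gterm Fs) -> option bool) (Ic : Ps -> list (cval Fs) -> bool).
Hypothesis cx_extends_sx : forall x b, sx x = Some b -> cx x = b.
Hypothesis sd_wf : forall x d, sd x = Some d -> wf_g arF d.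
Hypothesis cd_extends_sd : forall x d, sd x = Some d -> cd x = CD d.
Hypothesis Ic_extends_I : forall p ds, length ds = arP p -> Forall (wf_g arF) ds ->
  I p ds = Some (Ic p (map CD ds)).

Lemma satC_of_satP_dsatP (phi : form Xs Fs Ps) : wf_form arF arP phi ->
  (satP sx sd I phi -> satC cx cd Ic phi) /\
  (dsatP sx sd I phi -> ~ satC cx cd Ic phi).
Proof.
  induction phi as [|x|a IHa b IHb|a IHa|p ts]; simpl; intros Hwf.
  - tauto.
  - split; intros Hx; rewrite (cx_extends_sx x _ Hx); discriminate || reflexivity.
  - destruct Hwf as [Hwa Hwb].
    destruct (IHa Hwa), (IHb Hwb). tauto.
  - destruct (IHa Hwf). tauto.
  - destruct Hwf as [Hlen Hwfs].
    split; intros [ds [Hds HI]];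
      destruct (map_valC_of_valsP_wf Xs Fs arF sd cd sd_wf cd_extends_sd ts ds Hwfs Hds)
        as [-> [Hwfds Hlends]];
      rewrite Ic_extends_I in HI by congruence;
      injection HI as ->; congruence.
Qed.

Lemma satC_of_satP (phi : form Xs Fs Ps) :
  wf_form arF arP phi -> satP sx sd I phi -> satC cx cd Ic phi.
Proof. intros Hwf. exact (proj1 (satC_of_satP_dsatP phi Hwf)). Qed.

End Formulas.

Lemma satC_bigAnd {Xs Fs Ps} cx cd Ic (l : list (form Xs Fs Ps)) :
  Forall (satC cx cd Ic) l -> satC cx cd Ic (bigAnd l).
Proof. induction 1; simpl; auto. Qed.

Lemma satC_FA {Xs Fs Ps} (eqP : Ps) cx (cd : Xs -> cval Fs) Ic x :
  (Ic eqP [cd x; CNoflow] = true <-> cd x = CNoflow) ->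
  (cd x = CNoflow <-> cx x <> true) ->
  satC cx cd Ic (FA eqP x).
Proof. unfold FA, FIff, FImp. simpl. intros Heq Hflow. tauto. Qed.

Section Dagger.
Variables (Xs Fs : Type) (arF : Fs -> nat) (d0 : gterm Fs).
Variables (sx : Xs -> option bool) (sd : Xs -> option (gterm Fs)).

Lemma dagger_x_extends (x : Xs) b : sx x = Some b -> dagger_x sx x = b.
Proof. unfold dagger_x. now intros ->. Qed.

Lemma dagger_d_extends (x : Xs) d : sd x = Some d -> dagger_d d0 sx sd x = CD d.
Proof. unfold dagger_d. now intros ->. Qed.

Lemma wf_cv_dagger_d (x : Xs) :
  wf_g arF d0 -> (forall d, sd x = Some d -> wf_g arF d) ->
  wf_cv arF (dagger_d d0 sx sd x).
Proof.
  unfold dagger_d. intros Hd0 Hsd.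
  destruct (sd x) as [d|]; [exact (Hsd d eq_refl)|].
  destruct (sx x) as [[]|]; simpl; auto.
Qed.

Lemma dagger_d_noflow_iff (x : Xs) :
  MFA sx sd -> (dagger_d d0 sx sd x = CNoflow <-> dagger_x sx x <> true).
Proof.
  unfold MFA, dagger_d, dagger_x. intros Hmfa.
  destruct (sd x) eqn:Ed.
  - rewrite (Hmfa x) by congruence. split; congruence.
  - destruct (sx x) as [[]|]; split; congruence.
Qed.

End Dagger.

Theorem mainTheorem4
  (Xs Fs Ps : Type) (arF : Fs -> nat) (arP : Ps -> nat) (eqP : Ps)
  (HeqAr : arP eqP = 2)
  (psi : form Xs Fs Ps) (Hpsi : wf_form arF arP psi)
  (I : Ps -> list (gterm Fs) -> option bool)
  (Itotal : forall p ds, length ds = arP p -> Forall (wf_g arF) ds -> I p ds <> None)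
  (Ieq : forall d1 d2, wf_g arF d1 -> wf_g arF d2 ->
         (I eqP [d1; d2] = Some true <-> d1 = d2))
  (Ic : Ps -> list (cval Fs) -> bool)
  (Iagree : forall p ds, length ds = arP p -> Forall (wf_g arF) ds ->
            I p ds = Some (Ic p (map CD ds)))
  (Iceq : forall v1 v2, wf_cv arF v1 -> wf_cv arF v2 ->
          (Ic eqP [v1; v2] = true <-> v1 = v2))
  (sx : Xs -> option bool) (sd : Xs -> option (gterm Fs))
  (Hsd : forall x d, sd x = Some d -> wf_g arF d)
  (Hfire : partial_firing sx sd I psi)
  (d0 : gterm Fs) (Hd0 : wf_g arF d0) :
  classical_firing eqP (dagger_x sx) (dagger_d d0 sx sd) Ic psi.
Proof.
  destruct Hfire as [Hsat Hmfa].
  split.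
  - eapply satC_of_satP; eauto using dagger_x_extends, dagger_d_extends.
  - apply satC_bigAnd, Forall_forall. intros phi Hphi.
    apply in_map_iff in Hphi as [x [<- _]].
    apply satC_FA.
    + apply Iceq; simpl; auto. apply wf_cv_dagger_d; eauto.
    + now apply dagger_d_noflow_iff.
Qed.
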